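(* Suppose $\Sigma$ is of type-H. Let $\xi$ be any measure, and let $\lambda,\lambda_1,\lambda_2\in\mathbb R$. Define $q_\xi^*=c_{\xi00}-(c_{\xi01},c_{\xi02})\,Q_\xi^+\,(c_{\xi10},c_{\xi20})'$ and, with $\ell_\lambda=(1,\lambda,\lambda)'$, $\ell_2=(0,1,1)'$, $q_{\xi,2}^*=\ell_\lambda'V_\xi\ell_\lambda-(\ell_\lambda'V_\xi\ell_2)^2(\ell_2'V_\xi\ell_2)^+$. Then $q_{\xi,2}^*=q_\xi^*$. Moreover, if $1+2\lambda\ne0$ and $1+\lambda_1+\lambda_2\ne0$, define, with $\ell_3=(2,-1,-1)'$, $q_{\xi,3}^*=\ell_\lambda'V_\xi\ell_\lambda-(\ell_\lambda'V_\xi\ell_3)^2(\ell_3'V_\xi\ell_3)^+$, and with $\ell=(1,\lambda_1,\lambda_2)'$, $\ell_0=(-1,1+\lambda_2,-\lambda_2)'$, $\ell_1=(-1,-\lambda_1,1+\lambda_1)'$, $L_0=(\ell_0,\ell_1)$, $q_{\xi,1}^*=\ell'V_\xi\ell-\ell'V_\xi L_0(L_0'V_\xi L_0)^+L_0'V_\xi\ell$. Then $(1+2\lambda)^{-2}q_{\xi,3}^*=(1+\lambda_1+\lambda_2)^{-2}q_{\xi,1}^*$.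
   Context: Fix integers $k\ge 2$ and $t\ge 2$. Let $\mathcal S$ be the set of all $t^k$ sequences $s=(t_1,\dots,t_k)$ with entries $t_j\in\{1,\dots,t\}$. For $s\in\mathcal S$ let $T_s$ be the $k\times t$ matrix with $(j,i)$ entry equal to $1$ if $t_j=i$ and $0$ otherwise; let $H$ be the $k\times k$ matrix with $(i,j)$ entry $1$ if $i\equiv j+1\pmod k$ and $0$ otherwise; put $L_s=HT_s$, $R_s=H'T_s$ (a prime denotes transpose). Let $\Sigma$ be a fixed $k\times k$ positive definite matrix, $1_k$ the all-ones vector, and $\tilde B=\Sigma^{-1}-\Sigma^{-1}1_k1_k'\Sigma^{-1}/(1_k'\Sigma^{-1}1_k)$. With $G_0=T_s,G_1=L_s,G_2=R_s$ define for $0\le i,j\le 2$ the $t\times t$ matrices $C_{sij}=G_i'\tilde BG_j$. A measure is a vector $\xi=(p_s)_{s\in\mathcal S}$ with $p_s\ge0$, $\sum_sp_s=1$. Put $C_{\xi ij}=\sum_sp_sC_{sij}$, $c_{\xi ij}=\operatorname{tr}(C_{\xi ij})$, $V_\xi=(c_{\xi ij})_{0\le i,j\le2}$, $Q_\xi=(c_{\xi ij})_{1\le i,j\le2}$. $M^+$ denotes the Moore–Penrose inverse (for a scalar $a$, $a^+=1/a$ if $a\ne0$ and $0^+=0$). The matrix $\Sigma$ is of type-H if $\Sigma=I_k+\eta1_k'+1_k\eta'$ for some $\eta\in\mathbb R^k$ (and is positive definite). *)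

From HB Require Import structures.
From Stdlib Require Import ClassicalEpsilon.
From mathcomp Require Import all_boot all_order all_algebra.
Set Implicit Arguments. Unset Strict Implicit. Unset Printing Implicit Defensive.
Import Order.TTheory GRing.Theory Num.Theory.
Local Open Scope ring_scope.

Section Defs.
Variable R : realFieldType.

Definition is_MP (m n : nat) (A : 'M[R]_(m, n)) (X : 'M[R]_(n, m)) : Prop :=
  [/\ A *m X *m A = A, X *m A *m X = X,
      (A *m X)^T = A *m X & (X *m A)^T = X *m A].

Definition pinv (m n : nat) (A : 'M[R]_(m, n)) : 'M[R]_(n, m) :=
  epsilon (inhabits 0) (is_MP A).

Definition posdef (k : nat) (S : 'M[R]_k) : Prop :=
  S^T = S /\ forall x : 'cV[R]_k, x != 0 -> 0 < (x^T *m S *m x) 0 0.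

Definition ones (k : nat) : 'cV[R]_k := const_mx 1.

Definition typeH (k : nat) (S : 'M[R]_k) : Prop :=
  posdef S /\ exists eta : 'cV[R]_k,
    S = 1%:M + eta *m (ones k)^T + ones k *m eta^T.

(* sequences s = (t_1..t_k) with entries in {1..t}, encoded 0-based *)
Definition seqs (k t : nat) := {ffun 'I_k -> 'I_t}.

Definition Tmat (k t : nat) (s : seqs k t) : 'M[R]_(k, t) :=
  \matrix_(j < k, i < t) (s j == i)%:R.

Definition Hmat (k : nat) : 'M[R]_k :=
  \matrix_(i < k, j < k) (val i == ((val j).+1 %% k)%N)%:R.

Definition Lmat k t (s : seqs k t) : 'M[R]_(k, t) := Hmat k *m Tmat s.
Definition Rmat k t (s : seqs k t) : 'M[R]_(k, t) := (Hmat k)^T *m Tmat s.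

Definition Btilde (k : nat) (S : 'M[R]_k) : 'M[R]_k :=
  invmx S - ((((ones k)^T *m invmx S *m ones k) 0 0)^-1)
            *: (invmx S *m ones k *m (ones k)^T *m invmx S).

Definition Gmat k t (s : seqs k t) (i : 'I_3) : 'M[R]_(k, t) :=
  if val i == 0%N then Tmat s else if val i == 1%N then Lmat s else Rmat s.

Definition Cs k t (S : 'M[R]_k) (s : seqs k t) (i j : 'I_3) : 'M[R]_t :=
  (Gmat s i)^T *m Btilde S *m Gmat s j.

Definition is_measure k t (p : seqs k t -> R) : Prop :=
  (forall s, 0 <= p s) /\ \sum_s p s = 1.

Definition Cxi k t (S : 'M[R]_k) (p : seqs k t -> R) (i j : 'I_3) : 'M[R]_t :=
  \sum_s p s *: Cs S s i j.

Definition cxi k t S (p : seqs k t -> R) (i j : 'I_3) : R := \tr (Cxi S p i j).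

Definition Vxi k t S (p : seqs k t -> R) : 'M[R]_3 :=
  \matrix_(i, j) cxi S p i j.

Definition Qxi k t S (p : seqs k t -> R) : 'M[R]_2 :=
  \matrix_(i < 2, j < 2) cxi S p (lift ord0 i) (lift ord0 j).

Definition vec3 (a b c : R) : 'cV[R]_3 :=
  \col_(i < 3) (if val i == 0%N then a else if val i == 1%N then b else c).

Definition bil (u : 'cV[R]_3) (V : 'M[R]_3) (w : 'cV[R]_3) : R :=
  (u^T *m V *m w) 0 0.

Definition qstar k t S (p : seqs k t -> R) : R :=
  let c := cxi S p in
  c ord0 ord0 -
  ((\row_(j < 2) c ord0 (lift ord0 j)) *m pinv (Qxi S p)
     *m (\col_(i < 2) c (lift ord0 i) ord0)) 0 0.

(* l'Vl - (l'V m)^2 (m'Vm)^+ ; scalar pseudo-inverse of a field is x^-1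
   (with 0^-1 = 0 in MathComp) *)
Definition qproj (V : 'M[R]_3) (l m : 'cV[R]_3) : R :=
  bil l V l - (bil l V m) ^+ 2 * (bil m V m)^-1.

Definition q1 (V : 'M[R]_3) (l1 l2 : R) : R :=
  let l := vec3 1 l1 l2 in
  let L0 : 'M[R]_(3, 2) := row_mx (vec3 (-1) (1 + l2) (- l2))
                                  (vec3 (-1) (- l1) (1 + l1)) in
  (l^T *m V *m l - l^T *m V *m L0 *m pinv (L0^T *m V *m L0) *m L0^T *m V *m l) 0 0.

End Defs.

From HB Require Import structures.
From Stdlib Require Import ClassicalEpsilon.
From mathcomp Require Import all_boot all_order all_algebra fingroup perm.
From mathcomp.algebra_tactics Require Import ring lra.
Set Implicit Arguments. Unset Strict Implicit. Unset Printing Implicit Defensive.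
Import Order.TTheory GRing.Theory Num.Theory.
Local Open Scope ring_scope.

(* For Sigma of type H, [Btilde Sigma] is the centering matrix [P = I - 11'/k]
   (the eta-part of Sigma is killed by the projection onto [1^perp]), and [P]
   commutes with every permutation matrix, in particular with the cyclic
   shift [H]. Hence the trace form [tr (X' P Y)] is invariant under [H] and
   [V_xi] has the pattern [[a,b,b],[b,a,c],[b,c,a]]; being an average of
   Gram matrices it is positive semidefinite. All quantities are then
   explicit: [q*] and [q*_2] both equal [a - 2b^2/(a+c)], while the normalised
   [q*_3] and [q*_1] both equal [a - 2(a-b)^2/(3a+c-4b)]; for [q*_1] one splits
   [l] into an element of the column span of [L0] and its V-orthogonal
   complement. Semidefiniteness is only used at the vanishing denominators
   (where [x/0 = 0]): [a + c = 0] forces [b = 0], and [3a + c - 4b = 0] forces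
   [b = c = a]. *)

Lemma ord2_cases (i : 'I_2) : i = 0 \/ i = 1.
Proof. by case: i => [[|[|//]] ?]; [left|right]; apply: val_inj. Qed.

Lemma ord3_cases (i : 'I_3) : [\/ i = 0, i = 1 | i = 2].
Proof.
by case: i => [[|[|[|//]]] ?]; [apply: Or31|apply: Or32|apply: Or33]; apply: val_inj.
Qed.

Lemma sum_ord2 (V : nmodType) (F : 'I_2 -> V) : \sum_i F i = F 0 + F 1.
Proof. by rewrite big_ord_recl big_ord1; congr (F _ + F _); apply: val_inj. Qed.

Lemma sum_ord3 (V : nmodType) (F : 'I_3 -> V) : \sum_i F i = F 0 + F 1 + F 2.
Proof.
rewrite big_ord_recl big_ord_recl big_ord1 addrA.
by congr (F _ + F _ + F _); apply: val_inj.
Qed.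

Ltac mx_expand := rewrite ?(mxE, sum_ord2, sum_ord3) /=.

Lemma row_mx_col2 (R : nmodType) n (u v : 'cV[R]_n) :
  row_mx u v = \matrix_(i, j) if j == 0 then u i 0 else v i 0.
Proof.
apply/matrixP => i j; rewrite !mxE; case: splitP => j' jE; rewrite ord1.
  by rewrite (_ : j == 0) //; apply/eqP/val_inj; rewrite /= jE ord1.
by rewrite (_ : j == 0 = false) //; apply/negbTE/eqP => /(congr1 val); rewrite /= jE.
Qed.

Lemma lin_coef_eq0 (R : realFieldType) (g be : R) :
  0 <= g -> (forall x, 0 <= g * x ^+ 2 + be * x) -> be = 0.
Proof.
move=> g_ge0 nonneg; have g1_gt0 : 0 < (g + 1) ^+ 2 by rewrite exprn_gt0 ?ltr_wpDl.
have := nonneg (- be / (g + 1)).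
have -> : g * (- be / (g + 1)) ^+ 2 + be * (- be / (g + 1)) = - be ^+ 2 / (g + 1) ^+ 2.
  by field; rewrite gt_eqF ?ltr_wpDl.
rewrite pmulr_lge0 ?invr_gt0 // oppr_ge0 => be2_le0.
by apply/eqP; rewrite -sqrf_eq0 eq_le be2_le0 sqr_ge0.
Qed.

Lemma mxtrace_trmx_mul_ge0 (R : realFieldType) m n (N : 'M[R]_(m, n)) :
  0 <= \tr (N^T *m N).
Proof.
apply: sumr_ge0 => i _; rewrite mxE; apply: sumr_ge0 => l _.
by rewrite mxE -expr2 sqr_ge0.
Qed.

Section GeneralizedInverse.
Variable R : realFieldType.

Lemma sym2_MP_exists (A : 'M[R]_2) : A^T = A -> exists X, is_MP A X.
Proof.
move=> AT; have A10 : A 1 0 = A 0 1 by rewrite -[in LHS]AT mxE.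
set p := A 0 0; set q := A 0 1; set r := A 1 1.
have [det0|detN0] := eqVneq (p * r - q * q) 0; last first.
  pose B : 'M[R]_2 := (p * r - q * q)^-1 *: \matrix_(i, j)
    (if i == j then (if i == 0 then r else p) else - q).
  have AB : A *m B = 1%:M.
    apply/matrixP => i j; case: (ord2_cases i) => ->; case: (ord2_cases j) => ->;
      mx_expand; rewrite ?A10 -/p -/q -/r; field; exact: detN0.
  have BA := mulmx1C AB.
  by exists B; split; rewrite ?AB ?BA ?mul1mx ?trmx1.
(* A singular symmetric 2x2 matrix satisfies A^2 = (tr A) A. *)
have AA : A *m A = (p + r) *: A.
  apply/matrixP => i j; case: (ord2_cases i) => ->; case: (ord2_cases j) => ->;
    mx_expand; rewrite ?A10 -/p -/q -/r; move/eqP: det0 => det0; nra.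
have [tr0|trN0] := eqVneq (p + r) 0.
  have A0 : A = 0.
    have [p0 q0 r0] : [/\ p = 0, q = 0 & r = 0].
      by move/eqP: tr0 => tr0; move/eqP: det0 => det0; split; nra.
    apply/matrixP => i j; case: (ord2_cases i) => ->; case: (ord2_cases j) => ->;
      by rewrite mxE ?A10.
  by exists 0; rewrite A0 /is_MP ?mul0mx ?mulmx0 ?trmx0.
exists (((p + r) ^+ 2)^-1 *: A).
have AAA : A *m A *m A = (p + r) ^+ 2 *: A by rewrite AA -scalemxAl AA scalerA.
have sq0 : (p + r) ^+ 2 != 0 by rewrite sqrf_eq0.
split.
- by rewrite -scalemxAr -scalemxAl AAA scalerA mulVf // scale1r.
- rewrite -!scalemxAr -!scalemxAl AAA !scalerA.
  by congr (_ *: _); field; exact: trN0.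
- by rewrite -scalemxAr AA linearZ /= linearZ /= AT.
- by rewrite -scalemxAl AA linearZ /= linearZ /= AT.
Qed.

Lemma pinv_sym2K (A : 'M[R]_2) : A^T = A -> A *m pinv A *m A = A.
Proof.
move=> /sym2_MP_exists exMP.
by have [] := epsilon_spec (inhabits 0) (is_MP A) exMP.
Qed.

Lemma ginv_quad_form n (A X : 'M[R]_n) (y : 'cV[R]_n) :
  A^T = A -> A *m X *m A = A -> (A *m y)^T *m X *m (A *m y) = y^T *m A *m y.
Proof.
by move=> AT AXA; rewrite trmx_mul AT -!mulmxA (mulmxA A X) (mulmxA (A *m X) A) AXA.
Qed.

Lemma schur_ginv_residual n m (V : 'M[R]_n) (L : 'M[R]_(n, m))
    (l w : 'cV[R]_n) (y : 'cV[R]_m) (X : 'M[R]_m) :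
  V^T = V -> (L^T *m V *m L) *m X *m (L^T *m V *m L) = L^T *m V *m L ->
  l = w + L *m y -> L^T *m V *m w = 0 ->
  l^T *m V *m l - l^T *m V *m L *m X *m L^T *m V *m l = w^T *m V *m w.
Proof.
move=> VT AXA -> Lw0; set A := L^T *m V *m L.
have AT : A^T = A by rewrite /A !trmx_mul trmxK VT mulmxA.
have wVL : w^T *m V *m L = 0.
  by move/(congr1 trmx): Lw0; rewrite !trmx_mul trmxK VT trmx0 mulmxA.
have LVl : L^T *m V *m (w + L *m y) = A *m y.
  by rewrite mulmxDr Lw0 add0r /A !mulmxA.
have lVL : (w + L *m y)^T *m V *m L = (A *m y)^T.
  by rewrite -LVl !trmx_mul trmxK VT mulmxA.
have -> : (w + L *m y)^T *m V *m L *m X *m L^T *m V *m (w + L *m y)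
          = (A *m y)^T *m X *m (A *m y) by rewrite -lVL -LVl !mulmxA.
rewrite ginv_quad_form // mulmxDr [(w + _)^T]linearD /= !mulmxDl.
have -> : (L *m y)^T *m V *m w = 0 by rewrite trmx_mul -!mulmxA (mulmxA L^T) Lw0 mulmx0.
have -> : w^T *m V *m (L *m y) = 0 by rewrite mulmxA wVL mul0mx.
have -> : (L *m y)^T *m V *m (L *m y) = y^T *m A *m y by rewrite trmx_mul /A !mulmxA.
by rewrite addr0 add0r addrK.
Qed.

End GeneralizedInverse.

Section Centering.
Variables (R : realFieldType) (k : nat).
Local Notation o := (ones R k).

Definition centermx : 'M[R]_k := 1%:M - k%:R^-1 *: (o *m o^T).
Local Notation P := centermx.

Lemma ones_tr_ones : o^T *m o = (k%:R : R)%:M.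
Proof.
apply/matrixP => i j; rewrite !ord1 !mxE /=.
under eq_bigr do rewrite !mxE mulr1.
by rewrite sumr_const card_ord.
Qed.

Lemma tr_centermx : P^T = P.
Proof. by rewrite /centermx linearB /= linearZ /= trmx_mul trmxK trmx1. Qed.

Lemma perm_mx_ones (s : 'S_k) : perm_mx s *m o = o.
Proof. by rewrite -row_permE; apply/matrixP => i j; rewrite !mxE. Qed.

Lemma ones_tr_perm_mx (s : 'S_k) : o^T *m perm_mx s = o^T.
Proof. by rewrite -[perm_mx s]trmxK -trmx_mul tr_perm_mx perm_mx_ones. Qed.

Lemma perm_mx_centermx (s : 'S_k) : perm_mx s *m P = P *m perm_mx s.
Proof.
rewrite /centermx mulmxBr mulmxBl mulmx1 mul1mx -scalemxAr -scalemxAl.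
by rewrite mulmxA perm_mx_ones -mulmxA ones_tr_perm_mx.
Qed.

Lemma posdef_unitmx (S : 'M[R]_k) : posdef S -> S \in unitmx.
Proof.
move=> [_ Spos]; rewrite unitmxE unitfE; apply/negP => /det0P [v vN0 vS0].
have vTN0 : v^T != 0 by rewrite -(inj_eq (@trmx_inj _ _ _)) trmxK trmx0.
by have := Spos v^T vTN0; rewrite trmxK vS0 mul0mx mxE ltxx.
Qed.

Hypothesis k_gt0 : (0 < k)%N.

Lemma centermx_ones : P *m o = 0.
Proof.
rewrite /centermx mulmxBl mul1mx -scalemxAl -mulmxA ones_tr_ones mul_mx_scalar.
by rewrite scalerA mulVf ?scale1r ?subrr // pnatr_eq0 -lt0n.
Qed.

Lemma centermx_idem : P *m P = P.
Proof.
by rewrite {2}/centermx mulmxBr mulmx1 -scalemxAr mulmxA centermx_ones mul0mx scaler0 subr0.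
Qed.

Lemma Btilde_typeH (S : 'M[R]_k) : typeH S -> Btilde S = P.
Proof.
move=> [Spd [eta Sdef]]; have Su := posdef_unitmx Spd; set M := invmx S.
(* With u := k^-1 1 - P eta, P S = 1 - u 1', so P = M - u 1' M and,
   as P 1 = 0, M 1 = (1' M 1) u. *)
set u := k%:R^-1 *: o - P *m eta.
have PS : P *m S = 1%:M - u *m o^T.
  rewrite Sdef !mulmxDr mulmx1 !mulmxA centermx_ones mul0mx addr0.
  by rewrite /u [in RHS]mulmxBl -scalemxAl opprB addrCA addrC.
have PE : P = M - u *m o^T *m M by rewrite -[P](mulmxK Su) PS mulmxBl mul1mx.
set c := (o^T *m M *m o) 0 0.
have Mo : M *m o = c *: u.
  apply/eqP; rewrite -subr_eq0; apply/eqP.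
  move: centermx_ones; rewrite {1}PE mulmxBl -!mulmxA (mulmxA o^T).
  by rewrite (mx11_scalar (o^T *m M *m o)) -/c mul_mx_scalar.
have cN0 : c != 0.
  apply/eqP => c0; move: Mo; rewrite c0 scale0r => Mo.
  have : o = 0 by rewrite -[o]mul1mx -(mulmxV Su) -mulmxA -/M Mo mulmx0.
  by move/matrixP => /(_ (Ordinal k_gt0) 0); rewrite !mxE => /eqP; rewrite oner_eq0.
rewrite /Btilde -/M -/c Mo -!scalemxAl scalerA mulVf // scale1r.
by rewrite [RHS]PE.
Qed.

End Centering.

Definition cycle_shift k : 'S_k := perm (@ord_pred_inj k).

Lemma Hmat_cycle_shift (R : realFieldType) k : Hmat R k = perm_mx (cycle_shift k).
Proof.
apply/matrixP => i j; rewrite !mxE permE; congr (_%:R).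
by rewrite -(inj_eq (@ordS_inj k)) ord_predK.
Qed.

Section TraceForm.
Variables (R : realFieldType) (k t : nat).
Local Notation P := (centermx R k).

Definition tform (X Y : 'M[R]_(k, t)) : R := \tr (X^T *m P *m Y).

Lemma tformC X Y : tform X Y = tform Y X.
Proof. by rewrite /tform -mxtrace_tr !trmx_mul trmxK tr_centermx mulmxA. Qed.

Lemma tform_perm_mxl (s : 'S_k) X Y :
  tform (perm_mx s *m X) Y = tform X (perm_mx s^-1 *m Y).
Proof.
rewrite /tform trmx_mul tr_perm_mx -!mulmxA (mulmxA (perm_mx s^-1)).
by rewrite perm_mx_centermx !mulmxA.
Qed.

Lemma tform_perm_mx (s : 'S_k) X Y :
  tform (perm_mx s *m X) (perm_mx s *m Y) = tform X Y.
Proof. by rewrite tform_perm_mxl mulmxA -perm_mxM mulVg perm_mx1 mul1mx. Qed.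

Lemma tform_sumZ (I : finType) (a : I -> R) (X : I -> 'M[R]_(k, t)) :
  tform (\sum_i a i *: X i) (\sum_i a i *: X i)
  = \sum_i \sum_j a i * tform (X i) (X j) * a j.
Proof.
rewrite /tform [(\sum_i _)^T]raddf_sum /= !mulmx_suml raddf_sum /=.
apply: eq_bigr => i _; rewrite mulmx_sumr raddf_sum /=; apply: eq_bigr => j _.
by rewrite linearZ /= [(a i *: _)^T]linearZ /= -!scalemxAl !mxtraceZ; ring.
Qed.

Lemma tform_ge0 : (0 < k)%N -> forall X, 0 <= tform X X.
Proof.
move=> k_gt0 X; rewrite /tform -(centermx_idem R k_gt0) -{1}tr_centermx.
by rewrite !mulmxA -trmx_mul -mulmxA mxtrace_trmx_mul_ge0.
Qed.

End TraceForm.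

Definition Vpat (R : nmodType) (a b c : R) : 'M[R]_3 :=
  \matrix_(i, j) if i == j then a else if (i == 0) || (j == 0) then b else c.

Lemma bilE (R : realFieldType) (u w : 'cV[R]_3) (V : 'M[R]_3) :
  bil u V w = \sum_i \sum_j u i 0 * V i j * w j 0.
Proof.
rewrite /bil mxE exchange_big; apply: eq_bigr => j _; rewrite mxE mulr_suml.
by apply: eq_bigr => i _; rewrite mxE.
Qed.

Definition schur00 (R : realFieldType) (V : 'M[R]_3) : R :=
  V ord0 ord0 -
  ((\row_(j < 2) V ord0 (lift ord0 j))
     *m pinv (\matrix_(i < 2, j < 2) V (lift ord0 i) (lift ord0 j))
     *m \col_(i < 2) V (lift ord0 i) ord0) 0 0.

Section PatternedMatrix.
Variables (R : realFieldType) (a b c : R).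
Local Notation V := (Vpat a b c).

Lemma bil_Vpat x y z u v w :
  bil (vec3 x y z) V (vec3 u v w) =
  a * (x * u + y * v + z * w) + b * (x * v + x * w + y * u + z * u) + c * (y * w + z * v).
Proof. by rewrite /bil; mx_expand; ring. Qed.

Lemma tr_Vpat : V^T = V.
Proof. by apply/matrixP => i j; rewrite !mxE eq_sym orbC. Qed.

Section Psd.
Hypothesis V_psd : forall x, 0 <= bil x V x.

Lemma psd_Vpat_a_ge0 : 0 <= a.
Proof. by have := V_psd (vec3 1 0 0); rewrite bil_Vpat; lra. Qed.

(* Each degeneracy is detected along a line [x + t e] through a null vector
   [x] of the form, on which the form cannot have a linear term. *)
Lemma psd_Vpat_b_eq0 : a + c = 0 -> b = 0.
Proof.
move=> ac0; suff : 4 * b = 0 by lra.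
apply: (lin_coef_eq0 psd_Vpat_a_ge0) => x; have := V_psd (vec3 x 1 1).
by rewrite bil_Vpat; nra.
Qed.

Lemma psd_Vpat_const : 3 * a + c - 4 * b = 0 -> b = a /\ c = a.
Proof.
move=> D0; have ba : 4 * a - 4 * b = 0.
  apply: (lin_coef_eq0 psd_Vpat_a_ge0) => x; have := V_psd (vec3 (2 + x) (-1) (-1)).
  by rewrite bil_Vpat; nra.
suff : -2 * a + 4 * b - 2 * c = 0 by lra.
apply: (lin_coef_eq0 psd_Vpat_a_ge0) => x; have := V_psd (vec3 2 (-1 + x) (-1)).
by rewrite bil_Vpat; nra.
Qed.

End Psd.

Lemma schur00_Vpat : (a + c = 0 -> b = 0) -> schur00 V = a - 2 * b ^+ 2 / (a + c).
Proof.
move=> degen; rewrite /schur00.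
set Q := \matrix_(i < 2, j < 2) _; set col := \col_(i < 2) _.
have QT : Q^T = Q by apply/matrixP => i j; rewrite !mxE eq_sym orbC.
have rowE : \row_(j < 2) V ord0 (lift ord0 j) = col^T.
  by apply/matrixP => i j; rewrite !mxE eq_sym orbC.
set r := b / (a + c).
have br : (a + c) * r = b.
  have [ac0|acN0] := eqVneq (a + c) 0; first by rewrite ac0 mul0r degen.
  by rewrite /r mulrC mulfVK.
have colE : col = Q *m const_mx r.
  apply/matrixP => i j; rewrite !ord1.
  by case: (ord2_cases i) => ->; mx_expand; rewrite -br; ring.
rewrite rowE colE ginv_quad_form ?pinv_sym2K //; mx_expand.
by transitivity (a - 2 * r * ((a + c) * r)); [ring | rewrite br /r; ring].
Qed.

Lemma qproj_Vpat_l2 lam : (a + c = 0 -> b = 0) ->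
  qproj V (vec3 1 lam lam) (vec3 0 1 1) = a - 2 * b ^+ 2 / (a + c).
Proof.
move=> degen; have [ac0|acN0] := eqVneq (a + c) 0.
  have b0 := degen ac0; have ca : c = - a by lra.
  rewrite /qproj (_ : bil _ V (vec3 0 1 1) = 0); last by rewrite bil_Vpat b0 ca; ring.
  by rewrite bil_Vpat b0 ca; ring.
have den : bil (vec3 0 1 1) V (vec3 0 1 1) = 2 * (a + c) by rewrite bil_Vpat; ring.
by rewrite /qproj den !bil_Vpat; field; rewrite acN0.
Qed.

Lemma qproj_Vpat_l3 lam : (3 * a + c - 4 * b = 0 -> b = a /\ c = a) -> 1 + 2 * lam != 0 ->
  (1 + 2 * lam) ^- 2 * qproj V (vec3 1 lam lam) (vec3 2 (-1) (-1))
  = a - 2 * (a - b) ^+ 2 / (3 * a + c - 4 * b).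
Proof.
move=> degen lamN0; have [D0|DN0] := eqVneq (3 * a + c - 4 * b) 0.
  have [ba ca] := degen D0.
  rewrite /qproj (_ : bil _ V (vec3 2 (-1) (-1)) = 0); last by rewrite bil_Vpat ba ca; ring.
  by rewrite (expr2 0) !mul0r subr0 D0 invr0 mulr0 subr0 bil_Vpat ba ca; field.
have den : bil (vec3 2 (-1) (-1)) V (vec3 2 (-1) (-1)) = 2 * (3 * a + c - 4 * b).
  by rewrite bil_Vpat; ring.
by rewrite /qproj den !bil_Vpat; field; rewrite lamN0 DN0.
Qed.

Lemma q1_Vpat lam1 lam2 : (3 * a + c - 4 * b = 0 -> b = a /\ c = a) ->
  1 + lam1 + lam2 != 0 ->
  (1 + lam1 + lam2) ^- 2 * q1 V lam1 lam2 = a - 2 * (a - b) ^+ 2 / (3 * a + c - 4 * b).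
Proof.
move=> degen sN0; rewrite /q1 /= row_mx_col2.
set L0 := \matrix_(i, j) _; set l := vec3 1 lam1 lam2.
have LVL_sym : (L0^T *m V *m L0)^T = L0^T *m V *m L0.
  by rewrite !trmx_mul trmxK tr_Vpat mulmxA.
have LVLK := pinv_sym2K LVL_sym.
have [D0|DN0] := eqVneq (3 * a + c - 4 * b) 0.
  have [ba ca] := degen D0.
  have Ll0 : L0^T *m V *m l = 0.
    by apply/matrixP => i j; rewrite !ord1; case: (ord2_cases i) => ->; mx_expand;
      rewrite ba ca; ring.
  have ldef : l = l + L0 *m 0 by rewrite mulmx0 addr0.
  rewrite (schur_ginv_residual tr_Vpat LVLK ldef Ll0) -/(bil l V l) D0.
  by rewrite invr0 mulr0 subr0 bil_Vpat ba ca; field.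
(* The V-orthogonal projection of [l] onto the complement of the columns of
   [L0] is [w = s/D (a + c - 2b, a - b, a - b)]. *)
pose s := 1 + lam1 + lam2; pose D := 3 * a + c - 4 * b.
pose x := s / D * (a + c - 2 * b); pose z := s / D * (a - b).
pose y0 := (x * lam1 - z) / s.
pose y : 'cV[R]_2 := \col_j (if j == 0 then y0 else x - 1 - y0).
have ldef : l = vec3 x z z + L0 *m y.
  apply/matrixP => i j; rewrite !ord1; case: (ord3_cases i) => ->;
    rewrite /y /y0 /x /z /s /D; mx_expand; field; rewrite ?sN0 ?DN0 //.
have Lw0 : L0^T *m V *m vec3 x z z = 0.
  apply/matrixP => i j; rewrite !ord1; case: (ord2_cases i) => ->;
    rewrite /x /z /s /D; mx_expand; field; rewrite ?DN0 //.
rewrite (schur_ginv_residual tr_Vpat LVLK ldef Lw0) -/(bil (vec3 x z z) V (vec3 x z z)).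
by rewrite bil_Vpat /x /z /s /D; field; rewrite sN0 DN0.
Qed.

End PatternedMatrix.

Section InformationMatrix.
Variables (R : realFieldType) (k t : nat) (S : 'M[R]_k).
Hypothesis k_gt0 : (0 < k)%N.
Hypothesis BtildeS : Btilde S = centermx R k.

Local Notation G := (Gmat R).

Lemma cxiE (p : seqs k t -> R) i j :
  cxi S p i j = \sum_s p s * tform (G s i) (G s j).
Proof.
rewrite /cxi /Cxi raddf_sum; apply: eq_bigr => s _.
by rewrite /= mxtraceZ /Cs BtildeS.
Qed.

Lemma tform_Gmat (s : seqs k t) i j :
  tform (G s i) (G s j)
  = Vpat (tform (G s 0) (G s 0)) (tform (G s 0) (G s 1)) (tform (G s 1) (G s 2)) i j.
Proof.
set sh := cycle_shift k.
have G1 : G s 1 = perm_mx sh *m Tmat R s by rewrite /Gmat /= /Lmat Hmat_cycle_shift.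
have G2 : G s 2 = perm_mx sh^-1 *m Tmat R s.
  by rewrite /Gmat /= /Rmat Hmat_cycle_shift tr_perm_mx.
have G0 : G s 0 = Tmat R s by [].
case: (ord3_cases i) => ->; case: (ord3_cases j) => ->; rewrite mxE /= ?G0 ?G1 ?G2 //.
all: first [ by rewrite tform_perm_mx | by rewrite tformC
           | by rewrite tform_perm_mxl invgK | by rewrite tformC tform_perm_mxl invgK ].
Qed.

Lemma Vxi_Vpat (p : seqs k t -> R) :
  Vxi S p = Vpat (cxi S p 0 0) (cxi S p 0 1) (cxi S p 1 2).
Proof.
apply/matrixP => i j; rewrite [LHS]mxE cxiE.
under eq_bigr do rewrite tform_Gmat mxE.
by rewrite mxE; case: ifP => _; [|case: ifP => _]; rewrite cxiE.
Qed.

Lemma Vxi_psd (p : seqs k t -> R) : (forall s, 0 <= p s) ->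
  forall x, 0 <= bil x (Vxi S p) x.
Proof.
move=> p_ge0 x.
have -> : bil x (Vxi S p) x
          = \sum_s p s * tform (\sum_i x i 0 *: G s i) (\sum_i x i 0 *: G s i).
  rewrite bilE.
  under eq_bigr do under eq_bigr do rewrite mxE cxiE mulr_sumr mulr_suml.
  under eq_bigr do rewrite exchange_big.
  rewrite exchange_big; apply: eq_bigr => s _.
  rewrite tform_sumZ mulr_sumr; apply: eq_bigr => i _.
  by rewrite mulr_sumr; apply: eq_bigr => j _; ring.
by apply: sumr_ge0 => s _; rewrite mulr_ge0 ?tform_ge0.
Qed.

End InformationMatrix.

Lemma qstar_schur00 (R : realFieldType) k t (S : 'M[R]_k) (p : seqs k t -> R) :
  qstar S p = schur00 (Vxi S p).
Proof.
rewrite /qstar /schur00 /Qxi [Vxi S p ord0 ord0]mxE.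
by congr (_ - (_ *m pinv _ *m _) 0 0); apply/matrixP => i j; rewrite !mxE.
Qed.

Theorem lemma2 (R : realFieldType) (k t : nat) (hk : (2 <= k)%N) (ht : (2 <= t)%N)
  (S : 'M[R]_k) (HS : typeH S) (p : seqs k t -> R) (Hp : is_measure p)
  (lam lam1 lam2 : R) :
  let V := Vxi S p in
  qproj V (vec3 1 lam lam) (vec3 0 1 1) = qstar S p /\
  (1 + 2 * lam != 0 -> 1 + lam1 + lam2 != 0 ->
   (1 + 2 * lam) ^- 2 * qproj V (vec3 1 lam lam) (vec3 2 (-1) (-1))
   = (1 + lam1 + lam2) ^- 2 * q1 V lam1 lam2).
Proof.
move=> V; have k_gt0 : (0 < k)%N by apply: leq_trans hk.
have BtildeS := Btilde_typeH k_gt0 HS.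
have V_psd := Vxi_psd k_gt0 BtildeS Hp.1.
have VE : V = Vpat _ _ _ := Vxi_Vpat BtildeS p.
rewrite -/V VE in V_psd; rewrite qstar_schur00 -/V VE.
split=> [|lamN0 sN0].
  by rewrite schur00_Vpat ?qproj_Vpat_l2 //; apply: psd_Vpat_b_eq0.
by rewrite qproj_Vpat_l3 ?q1_Vpat //; apply: psd_Vpat_const.
Qed.
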